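(* Let $k$ be a positive integer, let $K=2^{3k+5}$, and let $G$ be a $K$-almost-regular graph on $n$ vertices with average degree $d(G)=Cn^{1/k}$ for some $C>0$. Then at most $\frac{2^{2k+10}}{\sqrt{C}}\hom(C_{2k},G)$ homomorphic $2k$-cycles in $G$ are degenerate.
   Context: A graph is $K$-almost-regular if its maximum degree is at most $K$ times its minimum degree. A homomorphic $2k$-cycle in $G$ is a sequence $(v_1,\dots,v_{2k})$ of vertices of $G$ such that $v_i$ is adjacent to $v_{i+1}$ for $i=1,\dots,2k-1$ and $v_{2k}$ is adjacent to $v_1$; it is non-degenerate if the $2k$ vertices are distinct and degenerate otherwise. $\hom(C_{2k},G)$ is the number of homomorphic $2k$-cycles in $G$. *)

From HB Require Import structures.
From mathcomp Require Import all_boot all_order all_algebra.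
From mathcomp Require Import reals exp.
Set Implicit Arguments. Unset Strict Implicit. Unset Printing Implicit Defensive.
Import Order.TTheory GRing.Theory Num.Theory.

(* A simple graph: vertex set T (finite), adjacency e : rel T,
   assumed symmetric and irreflexive in the theorem. *)
Section Graphs.
Variables (T : finType) (e : rel T).

Definition deg (v : T) : nat := #|[set u | e v u]|.

Definition almost_regular (K : nat) : Prop :=
  forall u v : T, deg u <= K * deg v.

Definition avg_deg (R : realType) : R :=
  ((\sum_(v : T) deg v)%:R / (#|T|%:R))%R.

Definition hom_cycle (m : nat) (f : {ffun 'I_m -> T}) : bool :=
  [forall i : 'I_m, e (f i) (f (ordS i))].

Definition hom_cycles (m : nat) : {set {ffun 'I_m -> T}} :=
  [set f | hom_cycle f].

Definition degenerate_cycles (m : nat) : {set {ffun 'I_m -> T}} :=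
  [set f | hom_cycle f & ~~ injectiveb f].

End Graphs.

From HB Require Import structures.
From mathcomp Require Import all_boot all_order all_algebra.
From mathcomp Require Import reals exp.
From mathcomp Require Import ring lra zify.
Import Order.TTheory GRing.Theory Num.Theory.
Set Implicit Arguments. Unset Strict Implicit. Unset Printing Implicit Defensive.

(* Homomorphic 2k-cycles are the closed walks of length 2k, so their number is
   F(k) = sum_v w_v(2k), where w_v(l) counts the closed walks of length l at v.
   Rotating a degenerate cycle so that a repeated vertex v comes last splits it
   into two closed walks at v, of lengths l and 2k - l; hence the degenerate
   cycles number at most (2k)^2 sum_v w_v(l) w_v(2k - l) for the worst l.
   By Cauchy-Schwarz j |-> w_v(2j) is log-convex, and odd lengths are squeezed
   between the neighbouring even ones, so w_v(l) w_v(2k - l) <= w_v(2) w_v(2k - 2)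
   = deg v * w_v(2k - 2), with deg v <= K d by almost-regularity.  Log-convexity
   of the totals F(j) and G(j) (all walks of length 2j) gives
   d^(2k) <= G(k) / n <= F(k) and F(k) <= n (F(k) / F(k-1))^k; as
   d^(2k) = n (C d)^k this forces F(k-1) <= F(k) / (C d).  Altogether the
   degenerate cycles number at most (2k)^2 K / C * F(k), and (2k)^2 K <= 2^(4k+20);
   when sqrt C <= 2^(2k+10) the bound is trivial. *)

Section FiniteSums.
Local Open Scope ring_scope.

Lemma cauchy_schwarz (R : realFieldType) (I : finType) (a b : I -> R) :
  (\sum_i a i * b i) ^+ 2 <= (\sum_i a i ^+ 2) * (\sum_i b i ^+ 2).
Proof.
have : 0 <= \sum_i \sum_j (a i * b j - a j * b i) ^+ 2.
  by apply: sumr_ge0 => i _; apply: sumr_ge0 => j _; apply: sqr_ge0.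
have -> : \sum_i \sum_j (a i * b j - a j * b i) ^+ 2 =
    \sum_i \sum_j a i ^+ 2 * b j ^+ 2 + \sum_i \sum_j b i ^+ 2 * a j ^+ 2
    - 2 * \sum_i \sum_j (a i * b i) * (a j * b j).
  rewrite mulr_sumr -big_split -sumrB /=; apply: eq_bigr => i _.
  rewrite mulr_sumr -big_split -sumrB /=; apply: eq_bigr => j _.
  ring.
rewrite -!big_distrlr /=.
set A := \sum_i a i ^+ 2; set B := \sum_i b i ^+ 2; set S := \sum_i a i * b i.
nra.
Qed.

Lemma sqr_sum_le (R : realFieldType) (I : finType) (a : I -> R) :
  (\sum_i a i) ^+ 2 <= #|I|%:R * \sum_i a i ^+ 2.
Proof.
have := cauchy_schwarz (fun=> 1) a.
rewrite (eq_bigr a (fun i _ => mul1r (a i))).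
by rewrite (eq_bigr (fun=> 1) (fun i _ => expr1n _ 2)) sumr_const.
Qed.

Lemma ler_sum_term (R : numDomainType) (I : finType) (F : I -> R) i :
  (forall j, 0 <= F j) -> F i <= \sum_j F j.
Proof. by move=> F_ge0; rewrite (bigD1 i) //= lerDl sumr_ge0. Qed.

End FiniteSums.

Section LogConvex.
Local Open Scope ring_scope.
Variables (R : realFieldType) (u : nat -> R).
Hypothesis u_gt0 : forall j, 0 < u j.
Hypothesis u_logconvex : forall j, u j.+1 ^+ 2 <= u j * u j.+2.

Lemma logconvex_ratio_le i j : (i <= j)%N -> u i.+1 * u j <= u i * u j.+1.
Proof.
elim: j => [|j IHj]; first by rewrite leqn0 => /eqP->; rewrite mulrC.
rewrite leq_eqVlt ltnS => /predU1P[->|/IHj le_ij]; first by rewrite mulrC.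
rewrite -(ler_pM2r (u_gt0 j)).
have := u_logconvex j; have := u_gt0 i; have := u_gt0 i.+1; have := u_gt0 j.+1.
nra.
Qed.

Lemma logconvex_majorize a b : (0 < a)%N -> (0 < b)%N ->
  u a * u b <= u 1 * u (a + b).-1.
Proof.
wlog le_ab : a b / (a <= b)%N.
  move=> H a_gt0 b_gt0; case: (leqP a b) => [|/ltnW] le; first exact: H.
  by rewrite mulrC addnC; apply: H.
elim: a b le_ab => // -[_ b _ _ |a IHa b le_ab _ b_gt0]; first by rewrite add1n.
apply: le_trans (logconvex_ratio_le (ltnW le_ab)) _.
by rewrite addSnnS; apply: IHa => //; lia.
Qed.

Lemma logconvex_odd_majorize a b (x y : R) : (0 < a)%N -> (0 < b)%N ->
  0 <= x -> 0 <= y -> x ^+ 2 <= u a * u a.+1 -> y ^+ 2 <= u b * u b.+1 ->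
  x * y <= u 1 * u (a + b).
Proof.
move=> a_gt0 b_gt0 x_ge0 y_ge0 x2_le y2_le.
have u_ge0 j : 0 <= u j := ltW (u_gt0 j).
have := logconvex_majorize a_gt0 (ltn0Sn b); have := logconvex_majorize (ltn0Sn a) b_gt0.
rewrite addnS addSn /= => maj1 maj2.
rewrite -ler_sqr ?nnegrE ?mulr_ge0 // exprMn.
apply: le_trans (ler_pM (sqr_ge0 _) (sqr_ge0 _) x2_le y2_le) _.
have -> : u a * u a.+1 * (u b * u b.+1) = u a * u b.+1 * (u a.+1 * u b) by ring.
by rewrite expr2 ler_pM ?mulr_ge0.
Qed.

Lemma logconvex_geometric_ge n : u 0 * (u 1 / u 0) ^+ n <= u n.
Proof.
elim: n => [|n IHn]; first by rewrite mulr1.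
have step : u 1 / u 0 * u n <= u n.+1.
  by rewrite mulrAC ler_pdivrMr // [X in _ <= X]mulrC logconvex_ratio_le.
apply: le_trans step; rewrite exprS mulrCA.
by apply: ler_wpM2l IHn; rewrite divr_ge0 // ltW.
Qed.

Lemma logconvex_geometric_le n : (0 < n)%N -> u n <= u 0 * (u n / u n.-1) ^+ n.
Proof.
case: n => // n _ /=; set r := u n.+1 / u n.
suff geom i : (i <= n.+1)%N -> u i <= u 0 * r ^+ i by apply: geom.
elim: i => [|i IHi] le_in; first by rewrite mulr1.
have step : u i.+1 <= r * u i.
  by rewrite mulrAC ler_pdivlMr // [X in _ <= X]mulrC logconvex_ratio_le.
apply: le_trans step _; rewrite exprS mulrCA.
by apply: ler_wpM2l (IHi (ltnW le_in)); rewrite divr_ge0 // ltW.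
Qed.

End LogConvex.

Section TupleBig.
Variables (R : Type) (idx : R) (op : Monoid.com_law idx) (T : finType).

Lemma big_tuple0 (F : 0.-tuple T -> R) : \big[op/idx]_(t : 0.-tuple T) F t = F [tuple].
Proof. by apply: big_pred1 => t; apply/esym/eqP; exact: tuple0. Qed.

Lemma big_tuple_cons n (F : n.+1.-tuple T -> R) :
  \big[op/idx]_(t : n.+1.-tuple T) F t =
  \big[op/idx]_(x : T) \big[op/idx]_(t : n.-tuple T) F [tuple of x :: t].
Proof.
rewrite pair_big (reindex (fun p : T * n.-tuple T => [tuple of p.1 :: p.2])) //=.
exists (fun t => (thead t, [tuple of behead t])) => [[x t] _ | t _] /=.
  by rewrite theadE; congr pair; apply: val_inj.
by rewrite -tuple_eta.
Qed.

Lemma big_tuple_cat a b (F : (a + b).-tuple T -> R) :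
  \big[op/idx]_(t : (a + b).-tuple T) F t =
  \big[op/idx]_(p : a.-tuple T) \big[op/idx]_(q : b.-tuple T) F [tuple of p ++ q].
Proof.
elim: a F => [|a IHa] F.
  by rewrite big_tuple0; apply: eq_bigr => q _; congr F; apply: val_inj.
rewrite big_tuple_cons big_tuple_cons; apply: eq_bigr => x _.
rewrite (IHa (fun t => F [tuple of x :: t])); apply: eq_bigr => p _.
by apply: eq_bigr => q _; congr F; apply: val_inj.
Qed.

End TupleBig.

Lemma card_set_nat (T : finType) (P : pred T) : #|[set x | P x]| = \sum_x P x.
Proof. by rewrite -sum1_card big_mkcond /=; apply: eq_bigr => x _; rewrite inE. Qed.

Section Walks.
Variables (T : finType) (e : rel T).

(* The walk x = v_0, v_1, ..., v_l = y is recorded as the l-tuple (v_1, ..., v_l). *)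
Definition walks l (x y : T) : {set l.-tuple T} :=
  [set t : l.-tuple T | path e x t & last x t == y].

Lemma card_walks0 x y : #|walks 0 x y| = (x == y).
Proof. by rewrite card_set_nat big_tuple0. Qed.

Lemma card_walksS l x y : #|walks l.+1 x y| = \sum_z e x z * #|walks l z y|.
Proof.
rewrite card_set_nat big_tuple_cons; apply: eq_bigr => z _.
rewrite card_set_nat big_distrr; apply: eq_bigr => t _ /=.
by case: (e x z); rewrite ?mul1n.
Qed.

Lemma card_walksD a b x y :
  #|walks (a + b) x y| = \sum_z #|walks a x z| * #|walks b z y|.
Proof.
elim: a x => [|a IHa] x.
  rewrite (bigD1 x) //= card_walks0 eqxx mul1n big1 ?addn0 // => z.
  by rewrite card_walks0 eq_sym => /negbTE ->.
rewrite addSn card_walksS.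
under eq_bigr do rewrite IHa big_distrr.
rewrite exchange_big; apply: eq_bigr => z _ /=.
by rewrite card_walksS big_distrl; apply: eq_bigr => w _; rewrite mulnA.
Qed.

Lemma card_walks1 x y : #|walks 1 x y| = e x y.
Proof.
rewrite card_walksS (bigD1 y) //= card_walks0 eqxx muln1 big1 ?addn0 // => z.
by rewrite card_walks0 => /negbTE ->; rewrite muln0.
Qed.

Lemma card_walks_isolated l x y : deg e x = 0 -> #|walks l.+1 x y| = 0.
Proof.
move/cards0_eq/setP => isox; rewrite card_walksS big1 // => z _.
by have := isox z; rewrite !inE => ->.
Qed.

Hypothesis esym : symmetric e.

Lemma card_walksC l x y : #|walks l x y| = #|walks l y x|.
Proof.
elim: l x y => [|l IHl] x y; first by rewrite !card_walks0 eq_sym.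
rewrite -[in RHS]addn1 card_walksD card_walksS; apply: eq_bigr => z _.
by rewrite IHl card_walks1 esym mulnC.
Qed.

Lemma card_closed_walks2 v : #|walks 2 v v| = deg e v.
Proof.
rewrite card_walksS /deg card_set_nat; apply: eq_bigr => z _.
by rewrite card_walks1 (esym z v) mulnb andbb.
Qed.

Lemma card_closed_walks_gt0 j v : 0 < deg e v -> 0 < #|walks j.*2 v v|.
Proof.
move=> deg_v; elim: j => [|j IHj]; first by rewrite card_walks0 eqxx.
rewrite doubleS -addn2 card_walksD (bigD1 v) //= card_closed_walks2.
by apply: leq_trans (leq_addr _ _); rewrite muln_gt0 IHj.
Qed.

End Walks.

Lemma cycle_nthP (T : Type) (e : rel T) x0 s :
  reflect (forall i, i < size s -> e (nth x0 s i) (nth x0 s (i.+1 %% size s)))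
          (cycle e s).
Proof.
case: s => [|x p]; first by left.
have nth_next i : i < (size p).+1 ->
    nth x0 (rcons p x) i = nth x0 (x :: p) (i.+1 %% (size p).+1).
  rewrite ltnS leq_eqVlt => /predU1P[->|ltip]; first by rewrite modnn nth_rcons ltnn eqxx.
  by rewrite modn_small // nth_rcons ltip.
have nth_cur i : i < (size p).+1 -> nth x0 (x :: rcons p x) i = nth x0 (x :: p) i.
  by move=> ltip; rewrite -rcons_cons nth_rcons ltip.
apply: (iffP (pathP x0)) => H i; rewrite ?size_rcons => ltip.
  by rewrite -nth_cur // -nth_next //; apply: H; rewrite size_rcons.
by rewrite nth_cur // nth_next //; apply: H.
Qed.

Lemma hom_cycle_tuple (T : finType) (e : rel T) m (f : {ffun 'I_m -> T}) :
  hom_cycle e f = cycle e (tuple_of_finfun f).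
Proof.
case: m f => [|m] f; first by rewrite (tuple0 (tuple_of_finfun f)); apply/forallP => -[].
apply/forallP/(cycle_nthP _ (f ord0)) => [H i | H i].
  rewrite size_tuple => ltim.
  by rewrite (nth_mktuple _ _ (Ordinal ltim)) (nth_mktuple _ _ (ordS (Ordinal ltim))).
have := H i; rewrite size_tuple => /(_ (ltn_ord i)).
by rewrite (nth_mktuple _ _ i) (nth_mktuple _ _ (ordS i)).
Qed.

Section CycleCounts.
Variables (T : finType) (e : rel T).

Lemma card_ffun_tuple m (P : pred (m.-tuple T)) :
  #|[set f : {ffun 'I_m -> T} | P (tuple_of_finfun f)]| = #|[set t : m.-tuple T | P t]|.
Proof.
rewrite -(on_card_preimset (f := tuple_of_finfun)); first by apply: eq_card => f; rewrite !inE.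
by apply: onW_bij; exact: Bijective tuple_of_finfunK finfun_of_tupleK.
Qed.

Lemma card_hom_cycles m : #|hom_cycles e m| = #|[set t : m.-tuple T | cycle e t]|.
Proof. by rewrite -card_ffun_tuple; apply: eq_card => f; rewrite !inE hom_cycle_tuple. Qed.

Lemma card_degenerate_cycles m :
  #|degenerate_cycles e m| = #|[set t : m.-tuple T | cycle e t & ~~ uniq t]|.
Proof. by rewrite -card_ffun_tuple; apply: eq_card => f; rewrite !inE hom_cycle_tuple. Qed.

Lemma sum_card_closed_walks m : 0 < m ->
  \sum_x #|walks e m x x| = #|[set t : m.-tuple T | cycle e t]|.
Proof.
case: m => // m _; rewrite card_set_nat.
under eq_bigr do rewrite card_set_nat.
rewrite exchange_big; apply: eq_bigr => -[[//|h s] sz_t] _ /=.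
rewrite (bigD1 (last h s)) //= big1 ?eqxx ?andbT ?addn0 => [|x].
  by rewrite rcons_path andbC.
by rewrite eq_sym => /negbTE->; rewrite andbF.
Qed.

Lemma cycle_cat_closed_walks x0 p q : 0 < size p -> 0 < size q ->
  \sum_v ((path e v p && (last v p == v)) * (path e v q && (last v q == v))) =
  cycle e (p ++ q) && (last x0 p == last x0 (p ++ q)).
Proof.
case: p => // ph ps _; case: q => // qh qs _.
rewrite (cycle_path x0) !last_cat cat_path /= (bigD1 (last qh qs)) //= big1.
  rewrite eqxx andbT addn0; case: eqP => [->|_]; last by rewrite !andbF.
  by rewrite !andbT mulnb -!andbA.
by move=> v; rewrite eq_sym => /negbTE ->; rewrite andbF muln0.
Qed.

Lemma card_cycles_split x0 n a b : n = a + b -> 0 < a -> 0 < b ->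
  #|[set s : n.-tuple T | cycle e s & nth x0 s a.-1 == last x0 s]| =
  \sum_v #|walks e a v v| * #|walks e b v v|.
Proof.
move=> -> a_gt0 b_gt0; rewrite card_set_nat big_tuple_cat /=.
under eq_bigr => p _ do under eq_bigr => q _ do
  rewrite nth_cat size_tuple prednK // leqnn -[in X in nth _ _ X.-1](size_tuple p) nth_last
          -(cycle_cat_closed_walks x0) ?size_tuple //.
under eq_bigr do rewrite exchange_big.
rewrite exchange_big; apply: eq_bigr => v _.
by rewrite !card_set_nat big_distrlr.
Qed.

(* Rotating by i + 1 moves position i to the end and position j to j - i - 1. *)
Lemma card_cycles_nth_eq_le x0 m i j : i < j -> j < m ->
  #|[set t : m.-tuple T | cycle e t & nth x0 t i == nth x0 t j]| <=
  \sum_v #|walks e (j - i) v v| * #|walks e (m - (j - i)) v v|.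
Proof.
move=> lt_ij lt_jm.
rewrite -(card_cycles_split x0 (_ : m = j - i + (m - (j - i)))); [|lia..].
pose rt (t : m.-tuple T) := [tuple of rot i.+1 t].
have rt_inj : injective rt.
  by move=> t1 t2 eq_rt; apply/val_inj/(@rot_inj i.+1); exact: (congr1 val eq_rt).
rewrite -(card_imset _ rt_inj); apply/subset_leq_card/subsetP => s /imsetP[t].
rewrite !inE => /andP[cyc_t /eqP eq_ij] ->; rewrite rot_cycle cyc_t /=.
rewrite -nth_last size_rot size_tuple /rot !nth_cat size_drop size_tuple.
have -> : (j - i).-1 < m - i.+1 by lia.
have -> : m.-1 < m - i.+1 = false by lia.
have -> : m.-1 - (m - i.+1) = i by lia.
by rewrite nth_drop nth_take // (_ : i.+1 + _ = j) ?eq_ij //; lia.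
Qed.

Lemma card_degenerate_tuple_le m :
  #|[set t : m.-tuple T | cycle e t & ~~ uniq t]| <=
  \sum_(i < m) \sum_(j < m)
     (i < j) * \sum_v #|walks e (j - i) v v| * #|walks e (m - (j - i)) v v|.
Proof.
case: (pickP (xpredT : pred T)) => [x0 _|T0]; last first.
  rewrite (_ : [set t | _] = set0) ?cards0 //.
  by apply/setP => -[[|x s] ?]; rewrite !inE ?andbF //; have := T0 x.
apply: (@leq_trans (\sum_(i < m) \sum_(j < m)
    (i < j) * #|[set t : m.-tuple T | cycle e t & nth x0 t i == nth x0 t j]|)); last first.
  apply: leq_sum => i _; apply: leq_sum => j _.
  by case: ltnP => //= lt_ij; rewrite !mul1n card_cycles_nth_eq_le.
have repeat_le (t : m.-tuple T) : (cycle e t && ~~ uniq t) <=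
    \sum_(i < m) \sum_(j < m) (i < j) * (cycle e t && (nth x0 t i == nth x0 t j)).
  case: (boolP (uniq t)) => [|/(uniqPn x0)[i [j [lt_ij]]]]; first by rewrite andbF.
  rewrite size_tuple andbT => lt_jm /eqP eq_ij.
  rewrite (bigD1 (Ordinal (ltn_trans lt_ij lt_jm))) //= (bigD1 (Ordinal lt_jm)) //= lt_ij.
  by rewrite eq_ij andbT mul1n -addnA leq_addr.
rewrite card_set_nat; apply: leq_trans; first by apply: leq_sum => t _; exact: repeat_le.
rewrite exchange_big; apply: leq_sum => i _; rewrite exchange_big; apply: leq_sum => j _.
by rewrite card_set_nat big_distrr.
Qed.

End CycleCounts.

Section WalkInequalities.
Local Open Scope ring_scope.
Variables (R : realFieldType) (T : finType) (e : rel T).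
Hypothesis esym : symmetric e.

Local Notation w l x y := (#|walks e l x y|%:R : R).
Local Notation F j := (\sum_v w j.*2 v v).
Local Notation G j := (\sum_x \sum_y w j.*2 x y).

Lemma walks_addE a b x y : w (a + b) x y = \sum_z w a x z * w b y z.
Proof.
rewrite card_walksD natr_sum; apply: eq_bigr => z _.
by rewrite (card_walksC esym b z y) natrM.
Qed.

Lemma closed_walks_sqr j v : w j.*2 v v = \sum_z w j v z ^+ 2.
Proof. by rewrite -addnn walks_addE; under eq_bigr do rewrite -expr2. Qed.

Lemma closed_walks_cauchy_schwarz a b v :
  w (a + b) v v ^+ 2 <= w a.*2 v v * w b.*2 v v.
Proof. by rewrite walks_addE !closed_walks_sqr; apply: cauchy_schwarz. Qed.

Lemma closed_walks_logconvex j v :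
  w j.+1.*2 v v ^+ 2 <= w j.*2 v v * w j.+2.*2 v v.
Proof. by rewrite -addnn addSnnS; apply: closed_walks_cauchy_schwarz. Qed.

Lemma closed_walks_gt0 j v : (0 < deg e v)%N -> 0 < w j.*2 v v.
Proof. by rewrite ltr0n; apply: card_closed_walks_gt0. Qed.

Lemma sum_walks_addE a b :
  \sum_x \sum_y w (a + b) x y = \sum_z (\sum_x w a x z) * (\sum_y w b y z).
Proof.
under eq_bigr do under eq_bigr do rewrite walks_addE.
under eq_bigr do rewrite exchange_big.
by rewrite exchange_big; apply: eq_bigr => z _; rewrite big_distrlr.
Qed.

Lemma sum_walks_sqr j : G j = \sum_z (\sum_x w j x z) ^+ 2.
Proof. by rewrite -addnn sum_walks_addE; under eq_bigr do rewrite -expr2. Qed.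

Lemma sum_closed_walks_logconvex j : F j.+1 ^+ 2 <= F j * F j.+2.
Proof.
rewrite -addnn addSnnS; under eq_bigr do rewrite walks_addE.
under [X in _ <= _ * X]eq_bigr do rewrite closed_walks_sqr.
under [X in _ <= X * _]eq_bigr do rewrite closed_walks_sqr.
rewrite !pair_bigA; exact: cauchy_schwarz.
Qed.

Lemma sum_walks_logconvex j : G j.+1 ^+ 2 <= G j * G j.+2.
Proof. by rewrite -addnn addSnnS sum_walks_addE !sum_walks_sqr; apply: cauchy_schwarz. Qed.

Lemma sum_walks_le j : G j <= #|T|%:R * F j.
Proof.
rewrite sum_walks_sqr mulr_sumr; apply: ler_sum => z _.
by rewrite closed_walks_sqr; under eq_bigr do rewrite (card_walksC esym); apply: sqr_sum_le.
Qed.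

Lemma sum_closed_walks0 : F 0 = #|T|%:R.
Proof. by rewrite -sumr_const; apply: eq_bigr => v _; rewrite card_walks0 eqxx. Qed.

Lemma sum_walks0 : G 0 = #|T|%:R.
Proof.
rewrite -sumr_const; apply: eq_bigr => x _.
rewrite (bigD1 x) //= card_walks0 eqxx big1 ?addr0 // => y.
by rewrite card_walks0 eq_sym => /negbTE ->.
Qed.

Lemma sum_walks1 : G 1 = \sum_z (deg e z)%:R ^+ 2.
Proof.
rewrite sum_walks_sqr; apply: eq_bigr => z _; congr (_ ^+ 2).
rewrite /deg card_set_nat natr_sum; apply: eq_bigr => x _.
by rewrite card_walks1 esym.
Qed.

Lemma sum_closed_walks_ge v k (d : R) : (0 < deg e v)%N ->
  d * #|T|%:R = (\sum_u deg e u)%:R -> (d ^+ 2) ^+ k <= F k.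
Proof.
move=> deg_v avg_d.
have n_gt0 : 0 < #|T|%:R :> R by rewrite ltr0n; apply/card_gt0P; exists v.
have G_gt0 j : 0 < G j.
  apply: lt_le_trans (ler_sum_term _ (fun _ => sumr_ge0 _ (fun _ _ => ler0n _ _))).
  exact: lt_le_trans (closed_walks_gt0 j deg_v) (ler_sum_term _ (fun _ => ler0n _ _)).
have avg_sqr : d ^+ 2 <= G 1 / #|T|%:R.
  rewrite ler_pdivlMr // sum_walks1 -(ler_pM2l n_gt0).
  have -> : #|T|%:R * (d ^+ 2 * #|T|%:R) = (d * #|T|%:R) ^+ 2 :> R by ring.
  by rewrite avg_d natr_sum sqr_sum_le.
have := logconvex_geometric_ge G_gt0 sum_walks_logconvex k; rewrite sum_walks0 => G_ge.
rewrite -(ler_pM2l n_gt0); apply: le_trans (le_trans G_ge (sum_walks_le k)).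
rewrite ler_pM2l //; apply: lerXn2r; rewrite ?nnegrE ?sqr_ge0 //.
exact: le_trans (sqr_ge0 d) avg_sqr.
Qed.

(* d^(2k) <= F k <= n (F k / F (k-1))^k, while d^(2k) = n (C d)^k. *)
Lemma sum_closed_walks_ratio_ge k (C d : R) : (0 < k)%N -> 0 < C ->
    d * #|T|%:R = (\sum_v deg e v)%:R -> d ^+ k = C ^+ k * #|T|%:R ->
  C * d * F k.-1 <= F k.
Proof.
move=> k_gt0 C_gt0 avg_d dk.
have [T0|T_gt0] := posnP #|T|.
  by rewrite !big_pred0 ?mulr0 // => v; have := card0_eq T0 v.
have n_gt0 : 0 < #|T|%:R :> R by rewrite ltr0n.
have d_gt0 : 0 < d.
  rewrite lt_def -(pmulr_lge0 _ n_gt0) avg_d ler0n andbT.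
  apply: contraTneq (mulr_gt0 (exprn_gt0 k C_gt0) n_gt0) => d0.
  by rewrite -dk d0 expr0n gtn_eqF // ltxx.
have [v deg_v] : exists v, (0 < deg e v)%N.
  case: (pickP (fun v => 0 < deg e v)%N) => [v ?|deg0]; first by exists v.
  move: d_gt0; rewrite -(pmulr_lgt0 _ n_gt0) avg_d big1 ?ltxx // => v _.
  by apply/eqP; rewrite -leqn0 leqNgt deg0.
have F_gt0 j : 0 < F j.
  exact: lt_le_trans (closed_walks_gt0 j deg_v) (ler_sum_term _ (fun _ => ler0n _ _)).
have := logconvex_geometric_le F_gt0 sum_closed_walks_logconvex k_gt0.
rewrite sum_closed_walks0 => F_le.
have ratio : (C * d) ^+ k <= (F k / F k.-1) ^+ k.
  rewrite -(ler_pM2l n_gt0); apply: le_trans F_le.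
  have -> : #|T|%:R * (C * d) ^+ k = (d ^+ 2) ^+ k.
    by rewrite exprAC expr2 {2}dk exprMn; ring.
  exact: sum_closed_walks_ge deg_v avg_d.
rewrite (ler_pXn2r k_gt0) ?nnegrE in ratio; last 2 first.
- by rewrite mulr_ge0 // ltW.
- by rewrite divr_ge0 // ltW.
by rewrite -ler_pdivlMr.
Qed.

Lemma sum_deg_closed_walks_le k (K C d : R) : (0 < k)%N -> 0 < C -> 0 <= K ->
    d * #|T|%:R = (\sum_v deg e v)%:R -> d ^+ k = C ^+ k * #|T|%:R ->
    (forall v, (deg e v)%:R <= K * d) ->
  \sum_v (deg e v)%:R * w k.-1.*2 v v <= K / C * F k.
Proof.
move=> k_gt0 C_gt0 K_ge0 avg_d dk degK.
apply: le_trans (ler_wpM2l _ (sum_closed_walks_ratio_ge k_gt0 C_gt0 avg_d dk)); last first.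
  by rewrite divr_ge0 // ltW.
rewrite !mulrA mulfVK ?gt_eqF // mulr_sumr.
by apply: ler_sum => v _; apply: ler_wpM2r.
Qed.

Hypothesis eirr : irreflexive e.

(* Even lengths are compared by log-convexity of j |-> w (2 j), odd lengths
   2 a + 1 through Cauchy-Schwarz between lengths 2 a and 2 a + 2; closed walks
   of length 1 would be loops. *)
Lemma closed_walks_pair_le k p q v : (p + q = k.*2)%N -> (0 < p)%N -> (0 < q)%N ->
  w p v v * w q v v <= (deg e v)%:R * w k.-1.*2 v v.
Proof.
move=> pq p_gt0 q_gt0; have [deg0|deg_gt0] := posnP (deg e v).
  by case: p p_gt0 pq => // p; rewrite card_walks_isolated // mul0r deg0 mul0r.
pose u j := w j.*2 v v.
have u_gt0 j : 0 < u j := closed_walks_gt0 j deg_gt0.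
rewrite -card_closed_walks2 // -/(u 1).
have odd_pq : odd p = odd q.
  by have := congr1 odd pq; rewrite oddD odd_double; case: (odd p); case: (odd q).
rewrite -(odd_double_half p) -(odd_double_half q) -odd_pq in pq p_gt0 q_gt0 *.
set a := p./2 in pq p_gt0 *; set b := q./2 in pq q_gt0 *; clearbody a b.
case: (odd p) pq p_gt0 q_gt0 => /= pq p_gt0 q_gt0; last first.
  rewrite !add0n !double_gt0 in p_gt0 q_gt0 *; rewrite (_ : k = a + b)%N; last by lia.
  exact: logconvex_majorize u_gt0 (closed_walks_logconvex ^~ v) _ _ p_gt0 q_gt0.
have loop0 : w 1 v v = 0 by rewrite card_walks1 eirr.
have [->|a_gt0] := posnP a; first by rewrite loop0 mul0r mulr_ge0 ?ler0n.
have [->|b_gt0] := posnP b; first by rewrite loop0 mulr0 mulr_ge0 ?ler0n.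
have -> : (1 + a.*2 = a + a.+1)%N by rewrite add1n -addnn addnS.
have -> : (1 + b.*2 = b + b.+1)%N by rewrite add1n -addnn addnS.
have -> : k.-1 = (a + b)%N by lia.
exact: logconvex_odd_majorize u_gt0 (closed_walks_logconvex ^~ v) _ _ _ _ a_gt0 b_gt0
  (ler0n _ _) (ler0n _ _) (closed_walks_cauchy_schwarz a a.+1 v)
  (closed_walks_cauchy_schwarz b b.+1 v).
Qed.

Lemma card_degenerate_cycles_le k :
  #|degenerate_cycles e k.*2|%:R <= (k.*2 ^ 2)%N%:R * \sum_v (deg e v)%:R * w k.-1.*2 v v.
Proof.
have := card_degenerate_tuple_le e k.*2.
rewrite -card_degenerate_cycles -(ler_nat R) => /le_trans; apply.
set B := \sum_v (deg e v)%:R * _.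
have -> : (k.*2 ^ 2)%N%:R * B = \sum_(i < k.*2) \sum_(j < k.*2) B.
  by rewrite !sumr_const card_ord -mulrnA mulnn mulr_natl.
rewrite natr_sum; apply: ler_sum => i _; rewrite natr_sum; apply: ler_sum => j _.
rewrite natrM; case: ltnP => lt_ij; last by rewrite mul0r sumr_ge0 // => v _; rewrite mulr_ge0.
rewrite mul1r natr_sum; apply: ler_sum => v _; rewrite natrM.
have lt_jk := ltn_ord j; apply: closed_walks_pair_le; lia.
Qed.

End WalkInequalities.

Local Open Scope ring_scope.

Lemma avg_deg_mulr (R : realType) (T : finType) (e : rel T) :
  avg_deg e R * #|T|%:R = (\sum_v deg e v)%:R.
Proof.
have [T0|T_gt0] := posnP #|T|; last by rewrite divfK // pnatr_eq0 -lt0n.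
by rewrite T0 mulr0 big_pred0 // => v; have := card0_eq T0 v.
Qed.

Lemma almost_regular_deg_le (R : realFieldType) (T : finType) (e : rel T) K (d : R) :
  almost_regular e K -> d * #|T|%:R = (\sum_v deg e v)%:R ->
  forall v, (deg e v)%:R <= K%:R * d.
Proof.
move=> reg avg_d v.
have n_gt0 : 0 < #|T|%:R :> R by rewrite ltr0n; apply/card_gt0P; exists v.
rewrite -(ler_pM2r n_gt0) -mulrA avg_d -!natrM ler_nat.
have : (\sum_(u : T) deg e v <= \sum_(u : T) K * deg e u)%N by apply: leq_sum.
by rewrite -big_distrr sum_nat_const cardT -cardE mulnC.
Qed.

Lemma powR_invn_expr (R : realType) (a : R) n : 0 <= a -> (0 < n)%N ->
  (a `^ n%:R^-1) ^+ n = a.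
Proof.
move=> a_ge0 n_gt0.
by rewrite -powR_mulrn ?powR_ge0 // -powRrM mulVf ?powRr1 // pnatr_eq0 -lt0n.
Qed.

Lemma degenerate_constant_le (R : rcfType) k (C : R) : 0 < C ->
    (2 ^ (2 * k + 10))%N%:R <= Num.sqrt C ->
  (k.*2 ^ 2)%N%:R * ((2 ^ (3 * k + 5))%N%:R / C) <=
  (2 ^ (2 * k + 10))%N%:R / Num.sqrt C.
Proof.
move=> C_gt0 large; have sqrtC_gt0 : 0 < Num.sqrt C by rewrite sqrtr_gt0.
have sqr_le_exp j : ((j + 3) ^ 2 <= 2 ^ (j + 4))%N.
  elim: j => // j IHj; rewrite !addSn (expnS 2 (j + 4)).
  by move: IHj; set X := (2 ^ (j + 4))%N; nia.
have nat_le : (k.*2 ^ 2 * 2 ^ (3 * k + 5) <= 2 ^ (2 * k + 10) * 2 ^ (2 * k + 10))%N.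
  apply: (@leq_trans (2 ^ (k + 6) * 2 ^ (3 * k + 5))); last first.
    by rewrite -!expnD leq_exp2l //; lia.
  rewrite leq_mul2r expn_eq0 /=.
  have := sqr_le_exp k; rewrite (expnD 2 k 6) (expnD 2 k 4) -muln2 expnMn.
  by set X := (2 ^ k)%N; nia.
rewrite mulrA ler_pdivrMr // -{2}(sqr_sqrtr (ltW C_gt0)) expr2 mulrA divfK ?gt_eqF //.
by apply: le_trans (ler_wpM2l (ler0n _ _) large); rewrite -!natrM ler_nat.
Qed.

Unset Implicit Arguments.
Theorem lemma4p3 (R : realType) (T : finType) (e : rel T) (k : nat) (C : R) :
  symmetric e -> irreflexive e -> (0 < k)%N ->
  almost_regular e (2 ^ (3 * k + 5)) ->
  0 < C ->
  avg_deg e R = C * (#|T|%:R) `^ (k%:R)^-1 ->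
  (#|degenerate_cycles e k.*2|)%:R
    <= (2 ^ (2 * k + 10))%N%:R / Num.sqrt C * (#|hom_cycles e k.*2|)%:R.
Proof.
move=> esym eirr k_gt0 reg C_gt0 avgE.
have [small|large] := lerP (Num.sqrt C) (2 ^ (2 * k + 10))%N%:R.
  have : (#|degenerate_cycles e k.*2| <= #|hom_cycles e k.*2|)%N.
    by apply/subset_leq_card/subsetP => f; rewrite !inE => /andP[].
  rewrite -(ler_nat R) => /le_trans; apply.
  by rewrite ler_peMl // ler_pdivlMr ?sqrtr_gt0 // mul1r.
have dk : avg_deg e R ^+ k = C ^+ k * #|T|%:R by rewrite avgE exprMn powR_invn_expr.
move: (avg_deg e R) (avg_deg_mulr R e) dk => d avg_d dk.
rewrite card_hom_cycles -sum_card_closed_walks ?double_gt0 // natr_sum.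
apply: le_trans (card_degenerate_cycles_le R esym eirr k) _.
have := sum_deg_closed_walks_le esym k_gt0 C_gt0 (ler0n _ _) avg_d dk
  (almost_regular_deg_le reg avg_d).
move=> /(ler_wpM2l (ler0n _ (k.*2 ^ 2))) /le_trans; apply.
by rewrite mulrA ler_wpM2r ?sumr_ge0 ?degenerate_constant_le // ltW.
Qed.
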